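(* Let $\mathcal{A}$ be a complex Banach algebra with identity, $\lambda$ a nonzero complex number, and $M = \begin{pmatrix} A & B \\ C & D \end{pmatrix} \in M_2(\mathcal{A})$ with $A, D \in \mathcal{A}^d$. If $$AB = \lambda A^\pi B D,\quad DC = 0,\quad BC = 0,$$ then $M \in M_2(\mathcal{A})^d$ and $$M^d = \begin{pmatrix} A^d & 0 \\ 0 & D^d \end{pmatrix} + \sum_{n=0}^{\infty} M^n Q (P^d)^{n+2},$$ where $Q = \begin{pmatrix} 0 & B \\ C & 0 \end{pmatrix}$ and $P^d = \begin{pmatrix} A^d & 0 \\ 0 & D^d \end{pmatrix}$.
   Context: $M_2(\mathcal{A})$ is the Banach algebra of $2\times 2$ matrices over $\mathcal{A}$. An element $x$ of a Banach algebra has a generalized Drazin (g-Drazin) inverse $x^d$ if $x^d$ commutes with $x$, $x^d = x^dxx^d$ and $x - x^2x^d$ is quasinilpotent (i.e. $\lim\|y^n\|^{1/n}=0$ for $y=x-x^2x^d$); $\mathcal{A}^d$ (resp. $M_2(\mathcal{A})^d$) denotes the set of g-Drazin invertible elements. The spectral idempotent is $x^\pi = 1 - xx^d$. *)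

From Stdlib Require Import Reals.
Open Scope R_scope.
Set Implicit Arguments.

Definition Cplx : Type := (R * R)%type.
Definition C0 : Cplx := (0, 0).
Definition C1 : Cplx := (1, 0).
Definition Cadd (a b : Cplx) : Cplx := (fst a + fst b, snd a + snd b).
Definition Cmul (a b : Cplx) : Cplx :=
  (fst a * fst b - snd a * snd b, fst a * snd b + snd a * fst b).
Definition Cmod (a : Cplx) : R := sqrt (fst a * fst a + snd a * snd a).

Record CBanachAlgebra := {
  car :> Type;
  zero : car; one : car;
  add : car -> car -> car; opp : car -> car; mul : car -> car -> car;
  scal : Cplx -> car -> car;
  norm : car -> R;
  addA : forall x y z, add x (add y z) = add (add x y) z;
  addC : forall x y, add x y = add y x;
  add0 : forall x, add zero x = x;
  addN : forall x, add x (opp x) = zero;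
  mulA : forall x y z, mul x (mul y z) = mul (mul x y) z;
  mul1l : forall x, mul one x = x;
  mul1r : forall x, mul x one = x;
  mulDl : forall x y z, mul (add x y) z = add (mul x z) (mul y z);
  mulDr : forall x y z, mul x (add y z) = add (mul x y) (mul x z);
  scalDl : forall a b x, scal (Cadd a b) x = add (scal a x) (scal b x);
  scalDr : forall a x y, scal a (add x y) = add (scal a x) (scal a y);
  scalA : forall a b x, scal (Cmul a b) x = scal a (scal b x);
  scal1 : forall x, scal C1 x = x;
  scal_mull : forall a x y, mul (scal a x) y = scal a (mul x y);
  scal_mulr : forall a x y, mul x (scal a y) = scal a (mul x y);
  norm_ge0 : forall x, 0 <= norm x;
  norm_eq0 : forall x, norm x = 0 -> x = zero;
  norm_triangle : forall x y, norm (add x y) <= norm x + norm y;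
  norm_scal : forall a x, norm (scal a x) = Cmod a * norm x;
  norm_submult : forall x y, norm (mul x y) <= norm x * norm y;
  norm_one : norm one = 1;
  complete : forall u : nat -> car,
    (forall eps, eps > 0 -> exists N, forall m n, (m >= N)%nat -> (n >= N)%nat ->
        norm (add (u m) (opp (u n))) < eps) ->
    exists l, forall eps, eps > 0 -> exists N, forall n, (n >= N)%nat ->
        norm (add (u n) (opp l)) < eps
}.

Fixpoint gpow (T : Type) (one : T) (mul : T -> T -> T) (x : T) (n : nat) : T :=
  match n with O => one | S k => mul x (gpow one mul x k) end.

(* n-th root of a nonnegative real, with the convention 0^(1/n) = 0 *)
Definition nroot (x : R) (n : nat) : R :=
  match Req_EM_T x 0 with left _ => 0 | right _ => Rpower x (/ INR n) end.

Definition quasinil (T : Type) (one : T) (mul : T -> T -> T) (norm : T -> R) (y : T) :=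
  Un_cv (fun n => nroot (norm (gpow one mul y n)) n) 0.

Definition gdrazin (T : Type) (one : T) (add : T -> T -> T) (opp : T -> T)
    (mul : T -> T -> T) (norm : T -> R) (x xd : T) : Prop :=
  mul xd x = mul x xd /\
  mul (mul xd x) xd = xd /\
  quasinil one mul norm (add x (opp (mul (mul x x) xd))).

Section Alg.
Variable X : CBanachAlgebra.

Definition is_gdrazin (x xd : X) : Prop :=
  gdrazin (one X) (@add X) (@opp X) (@mul X) (@norm X) x xd.

(* spectral idempotent x^pi = 1 - x x^d *)
Definition spid (x xd : X) : X := add X (one X) (opp X (mul X x xd)).

Record M2 := mk2 { e11 : X; e12 : X; e21 : X; e22 : X }.

Definition M2zero : M2 := mk2 (zero X) (zero X) (zero X) (zero X).
Definition M2one : M2 := mk2 (one X) (zero X) (zero X) (one X).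
Definition M2add (M N : M2) : M2 :=
  mk2 (add X (e11 M) (e11 N)) (add X (e12 M) (e12 N))
      (add X (e21 M) (e21 N)) (add X (e22 M) (e22 N)).
Definition M2opp (M : M2) : M2 :=
  mk2 (opp X (e11 M)) (opp X (e12 M)) (opp X (e21 M)) (opp X (e22 M)).
Definition M2mul (M N : M2) : M2 :=
  mk2 (add X (mul X (e11 M) (e11 N)) (mul X (e12 M) (e21 N)))
      (add X (mul X (e11 M) (e12 N)) (mul X (e12 M) (e22 N)))
      (add X (mul X (e21 M) (e11 N)) (mul X (e22 M) (e21 N)))
      (add X (mul X (e21 M) (e12 N)) (mul X (e22 M) (e22 N))).
(* a Banach-algebra norm on M_2(X) (all such norms are equivalent, so
   quasinilpotence and convergence do not depend on the choice) *)
Definition M2norm (M : M2) : R :=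
  norm X (e11 M) + norm X (e12 M) + norm X (e21 M) + norm X (e22 M).
Definition M2pow (M : M2) (n : nat) : M2 := gpow M2one M2mul M n.

Definition is_gdrazin2 (M Md : M2) : Prop :=
  gdrazin M2one M2add M2opp M2mul M2norm M Md.

Fixpoint M2partial (f : nat -> M2) (n : nat) : M2 :=
  match n with O => f O | S k => M2add (M2partial f k) (f (S k)) end.

Definition M2series_to (f : nat -> M2) (S : M2) : Prop :=
  forall eps, eps > 0 -> exists N, forall n, (n >= N)%nat ->
    M2norm (M2add (M2partial f n) (M2opp S)) < eps.
End Alg.

Arguments mk2 {X}.
Arguments is_gdrazin {X}.
Arguments spid {X}.
Arguments M2mul {X}.
Arguments M2add {X}.
Arguments M2opp {X}.
Arguments M2pow {X}.
Arguments is_gdrazin2 {X}.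
Arguments M2series_to {X}.
Arguments M2norm {X}.

(* The g-Drazin inverse is [Md = [[A^d, 0], [C (A^d)^2, D^d]]]. From the hypotheses,
   [A^d B = 0] and [D^d C = 0], hence [A B = lam B D]. With [a = A - A^2 A^d]
   quasinilpotent this gives [B D^n = lam^-n a^n B], so the norm of
   [B D^d = B D^n (D^d)^(n+1)] is bounded by a sequence decaying faster than any
   geometric one, i.e. [B D^d = 0]. Then [Md] commutes with [M], is an outer inverse of
   it, and [M - M^2 Md] is the block matrix [[a, B], [C A^pi, D - D^2 D^d]]. Its powers
   have diagonal and lower entries built from powers of the quasinilpotent diagonal, and
   an upper entry which the intertwining [a B = lam B (D - D^2 D^d)] turns into a scalar
   of size [(n+1)(1+|lam|)^n] times [B (D - D^2 D^d)^n], so it is quasinilpotent.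
   Finally [M^n Q (P^d)^(n+2)] vanishes for [n >= 1] (the right column of [M^n] kills
   [C], and [B D^d = 0]), so the series reduces to its first term [Md - P^d]. *)

From Pilot Require Import Defs.
From Stdlib Require Import Reals Lra Lia.
Open Scope R_scope.

Definition root_decay (x : nat -> R) : Prop :=
  forall eps, 0 < eps -> exists N, forall n, (N <= n)%nat -> x n <= eps ^ n.

Lemma INR_succ_le_pow2 n : INR n + 1 <= 2 ^ n.
Proof.
  induction n as [|n IH]; [simpl; lra|].
  rewrite S_INR; simpl. pose proof (pos_INR n). lra.
Qed.

Lemma root_decay_le x y : (forall n, y n <= x n) -> root_decay x -> root_decay y.
Proof.
  intros hyx hx eps heps. destruct (hx eps heps) as [N hN].
  exists N. intros n hn. eapply Rle_trans; eauto.
Qed.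

Lemma root_decay_geom x K : 0 < K -> root_decay x -> root_decay (fun n => K ^ n * x n).
Proof.
  intros hK hx eps heps. destruct (hx (eps / K)) as [N hN]; [apply Rdiv_lt_0_compat; lra|].
  exists N. intros n hn.
  replace (eps ^ n) with (K ^ n * (eps / K) ^ n)
    by (rewrite <- Rpow_mult_distr; f_equal; field; lra).
  apply Rmult_le_compat_l; [apply pow_le; lra | auto].
Qed.

Lemma root_decay_scale x C : 0 <= C -> root_decay x -> root_decay (fun n => C * x n).
Proof.
  intros hC hx eps heps. destruct (hx (eps / 2)) as [N1 h1]; [lra|].
  destruct (Pow_x_infinity 2 ltac:(rewrite Rabs_right; lra) C) as [N2 h2].
  exists (max N1 N2). intros n hn.
  specialize (h1 n ltac:(lia)). specialize (h2 n ltac:(lia)).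
  rewrite Rabs_right in h2 by (apply Rle_ge, pow_le; lra).
  replace (eps ^ n) with (2 ^ n * (eps / 2) ^ n)
    by (rewrite <- Rpow_mult_distr; f_equal; field).
  assert (0 <= (eps / 2) ^ n) by (apply pow_le; lra).
  apply Rle_trans with (C * (eps / 2) ^ n);
    [apply Rmult_le_compat_l | apply Rmult_le_compat_r]; lra.
Qed.

Lemma root_decay_plus x y : root_decay x -> root_decay y -> root_decay (fun n => x n + y n).
Proof.
  intros hx hy eps heps.
  destruct (hx (eps / 2)) as [N1 h1]; [lra|]. destruct (hy (eps / 2)) as [N2 h2]; [lra|].
  exists (max 1 (max N1 N2)). intros n hn.
  specialize (h1 n ltac:(lia)). specialize (h2 n ltac:(lia)).
  replace (eps ^ n) with (2 ^ n * (eps / 2) ^ n)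
    by (rewrite <- Rpow_mult_distr; f_equal; field).
  assert (0 <= (eps / 2) ^ n) by (apply pow_le; lra).
  assert (2 <= 2 ^ n).
  { pose proof (INR_succ_le_pow2 n). assert (1 <= INR n) by (apply (le_INR 1); lia). lra. }
  nra.
Qed.

Lemma root_decay_shift x : root_decay x -> root_decay (fun n => x (S n)).
Proof.
  intros hx eps heps. set (e := Rmin eps 1).
  assert (0 < e) by (apply Rmin_glb_lt; lra).
  assert (e <= eps) by apply Rmin_l. assert (e <= 1) by apply Rmin_r.
  destruct (hx e) as [N hN]; [assumption|].
  exists N. intros n hn. specialize (hN (S n) ltac:(lia)). simpl in hN.
  assert (0 <= e ^ n) by (apply pow_le; lra).
  assert (e ^ n <= eps ^ n) by (apply pow_incr; lra). nra.
Qed.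

Lemma root_decay_unshift x : root_decay (fun n => x (S n)) -> root_decay x.
Proof.
  intros hx eps heps.
  assert (hinv : 0 < / eps) by (apply Rinv_0_lt_compat; lra).
  destruct (root_decay_scale _ (/ eps) (Rlt_le _ _ hinv) hx eps heps) as [N hN].
  exists (S N). intros [|n] hn; [lia|]. specialize (hN n ltac:(lia)). simpl in hN |- *.
  apply Rmult_le_reg_l with (/ eps); [assumption|].
  replace (/ eps * (eps * eps ^ n)) with (eps ^ n) by (field; lra). exact hN.
Qed.

Lemma root_decay_const w : 0 <= w -> root_decay (fun _ => w) -> w = 0.
Proof.
  intros [hw|hw] h; [exfalso|auto].
  destruct (h (1 / 2)) as [N hN]; [lra|].
  destruct (pow_lt_1_zero (1 / 2) ltac:(rewrite Rabs_right; lra) w hw) as [N2 h2].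
  specialize (hN (max N N2) ltac:(lia)). specialize (h2 (max N N2) ltac:(lia)).
  rewrite Rabs_right in h2 by (apply Rle_ge, pow_le; lra). lra.
Qed.

Lemma Rpower_inv_INR_pow x n : 0 < x -> (0 < n)%nat -> Rpower x (/ INR n) ^ n = x.
Proof.
  intros hx hn. assert (0 < INR n) by (apply lt_0_INR; lia).
  rewrite <- Rpower_pow by (unfold Rpower; apply exp_pos).
  rewrite Rpower_mult, Rinv_l by lra. apply Rpower_1; lra.
Qed.

Lemma root_decay_iff_nroot x :
  (forall n, 0 <= x n) -> root_decay x <-> Un_cv (fun n => nroot (x n) n) 0.
Proof.
  intros hpos; split.
  - intros hx eps heps. destruct (hx (eps / 2)) as [N hN]; [lra|].
    exists (max N 1). intros n hn. specialize (hN n ltac:(lia)). unfold Rdist, nroot.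
    destruct (Req_EM_T (x n) 0) as [_|hne]; [rewrite Rminus_0_r, Rabs_R0; lra|].
    assert (0 < x n) by (destruct (hpos n); auto; congruence).
    assert (0 < Rpower (x n) (/ INR n)) by (unfold Rpower; apply exp_pos).
    assert (Rpower (x n) (/ INR n) <= eps / 2).
    { assert (0 < INR n) by (apply lt_0_INR; lia).
      apply Rle_trans with (Rpower ((eps / 2) ^ n) (/ INR n)).
      - apply Rle_Rpower_l; [left; apply Rinv_0_lt_compat|]; lra.
      - rewrite <- Rpower_pow, Rpower_mult, Rinv_r, Rpower_1 by lra. lra. }
    rewrite Rminus_0_r, Rabs_right; lra.
  - intros hc eps heps. destruct (hc eps heps) as [N hN].
    exists (max N 1). intros n hn. specialize (hN n ltac:(lia)). unfold Rdist, nroot in hN.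
    destruct (Req_EM_T (x n) 0) as [->|hne]; [apply pow_le; lra|].
    assert (0 < x n) by (destruct (hpos n); auto; congruence).
    assert (0 < Rpower (x n) (/ INR n)) by (unfold Rpower; apply exp_pos).
    rewrite Rminus_0_r, Rabs_right in hN by lra.
    rewrite <- (Rpower_inv_INR_pow (x n) n) by (auto; lia).
    apply pow_incr; lra.
Qed.

Lemma quasinil_iff_root_decay (T : Type) (one : T) (mul : T -> T -> T) (norm : T -> R)
    (y : T) :
  (forall z, 0 <= norm z) ->
  quasinil one mul norm y <-> root_decay (fun n => norm (gpow one mul y n)).
Proof. intros hnorm. symmetry. apply root_decay_iff_nroot. auto. Qed.

Lemma Cmod_ge0 a : 0 <= Cmod a.
Proof. apply sqrt_pos. Qed.

Lemma Cmul_inv_l lam : lam <> Defs.C0 -> exists mu, Cmul mu lam = Defs.C1.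
Proof.
  destruct lam as [l1 l2]. intros hlam.
  assert (hp : 0 < l1 * l1 + l2 * l2).
  { destruct (Req_dec l1 0), (Req_dec l2 0);
      [subst; exfalso; apply hlam; reflexivity | nra ..]. }
  exists (l1 / (l1 * l1 + l2 * l2), - l2 / (l1 * l1 + l2 * l2)).
  unfold Cmul, Defs.C1; simpl. f_equal; field; lra.
Qed.

Infix "+^" := (add _) (at level 50, left associativity).
Infix "*^" := (mul _) (at level 40, left associativity).
Notation "-^ x" := (opp _ x) (at level 35, right associativity).
Notation "x ^^ n" := (gpow (one _) (mul _) x n) (at level 30, right associativity).

Section BanachAlgebra.
Variable X : CBanachAlgebra.
Implicit Types x y z u v : X.

Lemma addr0 x : x +^ zero X = x.
Proof. rewrite addC; apply add0. Qed.

Lemma addKl x y z : x +^ y = x +^ z -> y = z.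
Proof.
  intros h. rewrite <- (add0 X y), <- (add0 X z), <- (addN X x), (addC X x), <- !addA, h.
  reflexivity.
Qed.

Lemma mulr0 x : x *^ zero X = zero X.
Proof. apply (addKl (x *^ zero X)). rewrite <- mulDr, !addr0. reflexivity. Qed.

Lemma mul0r x : zero X *^ x = zero X.
Proof. apply (addKl (zero X *^ x)). rewrite <- mulDl, !addr0. reflexivity. Qed.

Lemma opp_unique x y : x +^ y = zero X -> y = -^ x.
Proof. intros h. apply (addKl x). rewrite h, addN. reflexivity. Qed.

Lemma opp0 : -^ zero X = zero X.
Proof. symmetry. apply opp_unique, add0. Qed.

Lemma mulrN x y : x *^ -^ y = -^ (x *^ y).
Proof. apply opp_unique. rewrite <- mulDr, addN, mulr0. reflexivity. Qed.

Lemma mulNr x y : -^ x *^ y = -^ (x *^ y).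
Proof. apply opp_unique. rewrite <- mulDl, addN, mul0r. reflexivity. Qed.

Lemma scal0 x : scal X Defs.C0 x = zero X.
Proof.
  apply (addKl (scal X Defs.C0 x)). rewrite <- scalDl, addr0.
  f_equal. unfold Cadd, Defs.C0; simpl. f_equal; lra.
Qed.

Lemma scalr0 a : scal X a (zero X) = zero X.
Proof. apply (addKl (scal X a (zero X))). rewrite <- scalDr, !addr0. reflexivity. Qed.

Lemma norm0 : norm X (zero X) = 0.
Proof.
  rewrite <- (scal0 (zero X)), norm_scal. unfold Cmod, Defs.C0; simpl.
  replace (0 * 0 + 0 * 0) with 0 by lra. rewrite sqrt_0. lra.
Qed.

Lemma mul_eq0_mulA u v : u *^ v = zero X -> forall x, u *^ (v *^ x) = zero X.
Proof. intros h x. rewrite mulA, h, mul0r. reflexivity. Qed.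

Lemma pow_commute x y n : x *^ y = y *^ x -> x ^^ n *^ y = y *^ x ^^ n.
Proof.
  intros h. induction n as [|n IH]; simpl.
  - rewrite mul1l, mul1r. reflexivity.
  - rewrite <- mulA, IH, !mulA, h. reflexivity.
Qed.

Lemma norm_pow_le x n : norm X (x ^^ n) <= norm X x ^ n.
Proof.
  induction n as [|n IH]; simpl; [rewrite norm_one; lra|].
  eapply Rle_trans; [apply norm_submult|].
  apply Rmult_le_compat_l; [apply norm_ge0 | exact IH].
Qed.

Section OuterInverse.
Variables (d dd : X).
Hypotheses (hcomm : dd *^ d = d *^ dd) (houter : dd *^ d *^ dd = dd).

Lemma outer_inverse_mid : dd *^ (d *^ dd) = dd.
Proof. rewrite mulA. exact houter. Qed.

Lemma outer_inverse_sq : dd *^ (dd *^ d) = dd.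
Proof. rewrite hcomm, mulA. exact houter. Qed.

Lemma pow_mul_outer_inverse_pow n : d ^^ n *^ dd ^^ S n = dd.
Proof.
  induction n as [|n IH].
  - simpl. rewrite mul1l, mul1r. reflexivity.
  - change (d *^ d ^^ n *^ (dd *^ dd ^^ S n) = dd).
    rewrite <- mulA, (mulA X (d ^^ n) dd), (pow_commute _ _ n (eq_sym hcomm)).
    rewrite <- (mulA X dd), IH, mulA, <- hcomm. exact houter.
Qed.

End OuterInverse.

Definition scal_norm_le (s : Cplx) (k : R) : Prop :=
  forall x, norm X (scal X s x) <= k * norm X x.

Lemma intertwine_pow mu a b d : b *^ d = scal X mu (a *^ b) ->
  forall n, exists s, b *^ d ^^ n = scal X s (a ^^ n *^ b) /\ scal_norm_le s (Cmod mu ^ n).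
Proof.
  intros hbd n. induction n as [|n [s [hs hsn]]].
  - exists Defs.C1. simpl. rewrite scal1, mul1l, mul1r. split; [reflexivity|].
    intros x. rewrite scal1. lra.
  - exists (Cmul mu s). simpl. split.
    + rewrite scalA, mulA, hbd, scal_mull, <- mulA, hs, scal_mulr, mulA. reflexivity.
    + intros x. rewrite scalA, norm_scal.
      pose proof (Cmod_ge0 mu). pose proof (hsn x).
      rewrite Rmult_assoc. apply Rmult_le_compat_l; assumption.
Qed.

Lemma mul_outer_inverse_eq0 lam a b d dd : lam <> Defs.C0 ->
  quasinil (one X) (mul X) (norm X) a -> a *^ b = scal X lam (b *^ d) ->
  dd *^ d = d *^ dd -> dd *^ d *^ dd = dd -> b *^ dd = zero X.
Proof.
  intros hlam qa hab hcomm houter.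
  destruct (Cmul_inv_l lam hlam) as [mu hmu].
  assert (hbd : b *^ d = scal X mu (a *^ b))
    by (rewrite hab, <- scalA, hmu, scal1; reflexivity).
  apply quasinil_iff_root_decay in qa; [|apply norm_ge0].
  apply norm_eq0, root_decay_const; [apply norm_ge0|].
  set (L := Cmod mu * norm X dd + 1).
  assert (hL : 0 < L)
    by (pose proof (Cmod_ge0 mu); pose proof (norm_ge0 X dd); unfold L; nra).
  apply (root_decay_le (fun n => norm X b * norm X dd * (L ^ n * norm X (a ^^ n)))).
  2: { apply root_decay_scale, root_decay_geom; try assumption.
       apply Rmult_le_pos; apply norm_ge0. }
  intros n. destruct (intertwine_pow mu a b d hbd n) as [s [hs hsn]].
  assert (hsplit : b *^ dd = scal X s (a ^^ n *^ b *^ dd ^^ S n)).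
  { rewrite <- scal_mull, <- hs, <- mulA, pow_mul_outer_inverse_pow; auto. }
  rewrite hsplit.
  eapply Rle_trans; [apply hsn|].
  pose proof (norm_submult X (a ^^ n *^ b) (dd ^^ S n)) as h1.
  pose proof (norm_submult X (a ^^ n) b) as h2.
  pose proof (norm_pow_le dd (S n)) as h3. simpl pow in h3.
  pose proof (norm_ge0 X (a ^^ n)). pose proof (norm_ge0 X b).
  pose proof (norm_ge0 X (a ^^ n *^ b)). pose proof (norm_ge0 X (dd ^^ S n)).
  pose proof (norm_ge0 X dd). pose proof (Cmod_ge0 mu).
  assert (hmuL : Cmod mu ^ n * norm X dd ^ n <= L ^ n).
  { rewrite <- Rpow_mult_distr. apply pow_incr. unfold L. split; nra. }
  assert (0 <= Cmod mu ^ n) by (apply pow_le; assumption).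
  assert (0 <= norm X dd ^ n) by (apply pow_le; assumption).
  apply Rle_trans with
    (Cmod mu ^ n * (norm X (a ^^ n) * norm X b * (norm X dd * norm X dd ^ n))).
  - apply Rmult_le_compat_l; [assumption|]. eapply Rle_trans; [exact h1|].
    apply Rmult_le_compat; assumption.
  - replace (Cmod mu ^ n * (norm X (a ^^ n) * norm X b * (norm X dd * norm X dd ^ n)))
      with (norm X b * norm X dd * ((Cmod mu ^ n * norm X dd ^ n) * norm X (a ^^ n))) by ring.
    apply Rmult_le_compat_l; [nra|]. apply Rmult_le_compat_r; assumption.
Qed.

(* The upper right entry of [[a, b], [c, d]]^n when [b c = d c = 0]. *)
Fixpoint corner a b d n : X :=
  match n with O => zero X | S k => b *^ d ^^ k +^ a *^ corner a b d k end.

Lemma corner_scal lam a b d : a *^ b = scal X lam (b *^ d) -> forall n,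
  exists s, corner a b d (S n) = scal X s (b *^ d ^^ n) /\
            scal_norm_le s ((INR n + 1) * (1 + Cmod lam) ^ n).
Proof.
  intros hab n. pose proof (Cmod_ge0 lam) as hlam.
  induction n as [|n [s [hs hsn]]].
  - exists Defs.C1. simpl. rewrite mulr0, addr0, scal1. split; [reflexivity|].
    intros x. rewrite scal1. lra.
  - exists (Cadd Defs.C1 (Cmul s lam)). split.
    + change (corner a b d (S (S n))) with (b *^ d ^^ S n +^ a *^ corner a b d (S n)).
      rewrite hs, scal_mulr, mulA, hab, scal_mull, <- mulA, scalDl, scal1, scalA.
      reflexivity.
    + intros x. rewrite scalDl, scal1, scalA.
      eapply Rle_trans; [apply norm_triangle|].
      pose proof (hsn (scal X lam x)) as h. rewrite (norm_scal X lam x) in h.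
      pose proof (norm_ge0 X x). pose proof (pos_INR n).
      assert (1 <= (1 + Cmod lam) ^ n) by (apply pow_R1_Rle; lra).
      set (P := (1 + Cmod lam) ^ n) in *. rewrite S_INR. simpl pow. fold P.
      assert (norm X x <= (INR n + 1 + 1) * P * norm X x).
      { rewrite <- (Rmult_1_l (norm X x)) at 1. apply Rmult_le_compat_r; nra. }
      assert (0 <= P * Cmod lam * norm X x) by (repeat apply Rmult_le_pos; lra).
      lra.
Qed.

Lemma M2pow_block_succ a b c d : b *^ c = zero X -> d *^ c = zero X -> forall n,
  M2pow (mk2 a b c d) (S n) =
  mk2 (a ^^ S n) (corner a b d (S n)) (c *^ a ^^ n) (d ^^ S n +^ c *^ corner a b d n).
Proof.
  intros hbc hdc n. unfold M2pow. induction n as [|n IH].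
  - simpl. unfold M2mul; simpl. rewrite !mulr0, ?addr0, ?add0. reflexivity.
  - change (gpow (M2one X) M2mul (mk2 a b c d) (S (S n)))
      with (M2mul (mk2 a b c d) (gpow (M2one X) M2mul (mk2 a b c d) (S n))).
    rewrite IH. unfold M2mul; simpl.
    rewrite !mulDr, !mulA, hbc, hdc, !mul0r, !addr0.
    f_equal; apply addC.
Qed.

Lemma M2norm_ge0 (M : M2 X) : 0 <= M2norm M.
Proof.
  unfold M2norm. pose proof (norm_ge0 X).
  repeat apply Rplus_le_le_0_compat; auto.
Qed.

Lemma quasinil_block lam a b c d : a *^ b = scal X lam (b *^ d) ->
  b *^ c = zero X -> d *^ c = zero X ->
  quasinil (one X) (mul X) (norm X) a -> quasinil (one X) (mul X) (norm X) d ->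
  quasinil (M2one X) M2mul M2norm (mk2 a b c d).
Proof.
  intros hab hbc hdc qa qd.
  apply quasinil_iff_root_decay in qa, qd; try apply norm_ge0.
  apply quasinil_iff_root_decay; [apply M2norm_ge0|].
  set (K := 2 * (1 + Cmod lam)). pose proof (Cmod_ge0 lam).
  assert (qt : root_decay (fun n => norm X (corner a b d n))).
  { apply root_decay_unshift,
      (root_decay_le (fun n => norm X b * (K ^ n * norm X (d ^^ n)))).
    - intros n. destruct (corner_scal lam a b d hab n) as [s [-> hs]].
      eapply Rle_trans; [apply hs|].
      pose proof (norm_submult X b (d ^^ n)). pose proof (INR_succ_le_pow2 n).
      pose proof (norm_ge0 X b). pose proof (norm_ge0 X (d ^^ n)).
      assert (0 <= (1 + Cmod lam) ^ n) by (apply pow_le; lra). pose proof (pos_INR n).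
      unfold K. rewrite Rpow_mult_distr.
      apply Rle_trans with ((INR n + 1) * (1 + Cmod lam) ^ n * (norm X b * norm X (d ^^ n))).
      + apply Rmult_le_compat_l; [apply Rmult_le_pos; lra | assumption].
      + replace (norm X b * (2 ^ n * (1 + Cmod lam) ^ n * norm X (d ^^ n)))
          with (2 ^ n * (1 + Cmod lam) ^ n * (norm X b * norm X (d ^^ n))) by ring.
        apply Rmult_le_compat_r; [apply Rmult_le_pos; assumption|].
        apply Rmult_le_compat_r; assumption.
    - apply root_decay_scale, root_decay_geom; [apply norm_ge0 | unfold K; lra | assumption]. }
  apply root_decay_unshift, (root_decay_le (fun n =>
    norm X (a ^^ S n) + norm X (corner a b d (S n)) + norm X c * norm X (a ^^ n)
    + norm X (d ^^ S n) + norm X c * norm X (corner a b d n))).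
  - intros n. pose proof (M2pow_block_succ a b c d hbc hdc n) as hpow.
    unfold M2pow in hpow. rewrite hpow.
    unfold M2norm; simpl.
    pose proof (norm_submult X c (a ^^ n)).
    pose proof (norm_triangle X (d *^ d ^^ n) (c *^ corner a b d n)).
    pose proof (norm_submult X c (corner a b d n)). lra.
  - pose proof (norm_ge0 X c) as hc.
    repeat apply root_decay_plus.
    + exact (root_decay_shift _ qa).
    + exact (root_decay_shift _ qt).
    + exact (root_decay_scale _ _ hc qa).
    + exact (root_decay_shift _ qd).
    + exact (root_decay_scale _ _ hc qt).
Qed.

End BanachAlgebra.

Section Matrices.
Variable X : CBanachAlgebra.

Lemma M2pow_diag (x y : X) n :
  M2pow (mk2 x (zero X) (zero X) y) n = mk2 (x ^^ n) (zero X) (zero X) (y ^^ n).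
Proof.
  unfold M2pow. induction n as [|n IH]; [reflexivity|].
  simpl. rewrite IH. unfold M2mul; simpl. rewrite !mulr0, !mul0r, !addr0, !add0. reflexivity.
Qed.

Lemma M2pow_right_column_mul (M : M2 X) (z : X) :
  e12 M *^ z = zero X -> e22 M *^ z = zero X ->
  forall n, e12 (M2pow M (S n)) *^ z = zero X /\ e22 (M2pow M (S n)) *^ z = zero X.
Proof.
  intros h12 h22 n. unfold M2pow. induction n as [|n [IH12 IH22]].
  - simpl. rewrite !mulr0, !add0, !mul1r. auto.
  - change (gpow (M2one X) M2mul M (S (S n))) with (M2mul M (gpow (M2one X) M2mul M (S n))).
    destruct (gpow (M2one X) M2mul M (S n)) as [y11 y12 y21 y22]. simpl in IH12, IH22 |- *.
    rewrite !mulDl, <- !mulA, IH12, IH22, !mulr0, addr0. auto.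
Qed.

Lemma M2series_to_head (f : nat -> M2 X) :
  (forall n, f (S n) = M2zero X) -> M2series_to f (f O).
Proof.
  intros hf eps heps. exists O. intros n _.
  assert (hpart : M2partial f n = f O).
  { induction n as [|n IH]; [reflexivity|].
    simpl. rewrite IH, hf. unfold M2add, M2zero; simpl. rewrite !addr0.
    destruct (f O); reflexivity. }
  rewrite hpart. unfold M2norm, M2add, M2opp; simpl. rewrite !addN, norm0. lra.
Qed.

End Matrices.

Section Corollary.
Variables (X : CBanachAlgebra) (lam : Cplx) (A B C D Ad Dd : X).
Hypotheses (hlam : lam <> Defs.C0)
  (hAc : Ad *^ A = A *^ Ad) (hAi : Ad *^ A *^ Ad = Ad)
  (hAq : quasinil (one X) (mul X) (norm X) (A +^ -^ (A *^ A *^ Ad)))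
  (hDc : Dd *^ D = D *^ Dd) (hDi : Dd *^ D *^ Dd = Dd)
  (hDq : quasinil (one X) (mul X) (norm X) (D +^ -^ (D *^ D *^ Dd)))
  (hAB : A *^ B = scal X lam (spid A Ad *^ B *^ D))
  (hDC : D *^ C = zero X) (hBC : B *^ C = zero X).

Lemma Ad_mul_spid : Ad *^ spid A Ad = zero X.
Proof. unfold spid. rewrite mulDr, mul1r, mulrN, mulA, hAi, addN. reflexivity. Qed.

Lemma Ad_mul_B : Ad *^ B = zero X.
Proof.
  assert (hAdAB : Ad *^ (A *^ B) = zero X).
  { rewrite hAB, scal_mulr, !mulA, Ad_mul_spid, !mul0r, scalr0. reflexivity. }
  rewrite <- (outer_inverse_sq X A Ad hAc hAi), <- !mulA, hAdAB, mulr0. reflexivity.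
Qed.

Lemma Dd_mul_C : Dd *^ C = zero X.
Proof. rewrite <- (outer_inverse_sq X D Dd hDc hDi), <- !mulA, hDC, !mulr0. reflexivity. Qed.

Lemma A_mul_B : A *^ B = scal X lam (B *^ D).
Proof.
  rewrite hAB. unfold spid.
  rewrite mulDl, mul1l, mulNr, <- mulA, Ad_mul_B, mulr0, opp0, addr0. reflexivity.
Qed.

Lemma B_mul_Dd : B *^ Dd = zero X.
Proof.
  apply (mul_outer_inverse_eq0 X lam (A +^ -^ (A *^ A *^ Ad)) B D Dd hlam hAq);
    [| exact hDc | exact hDi].
  rewrite mulDl, mulNr, <- mulA, Ad_mul_B, mulr0, opp0, addr0. exact A_mul_B.
Qed.

Lemma B_mul_residual_D : B *^ (D +^ -^ (D *^ D *^ Dd)) = B *^ D.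
Proof.
  assert (hDDDd : D *^ D *^ Dd = Dd *^ D *^ D)
    by (rewrite <- mulA, <- hDc, mulA, <- hDc; reflexivity).
  rewrite hDDDd, mulDr, mulrN, !mulA, B_mul_Dd, !mul0r, opp0, addr0. reflexivity.
Qed.

Lemma B_mul_D_Dd : B *^ (D *^ Dd) = zero X.
Proof. rewrite <- hDc, mulA, B_mul_Dd, mul0r. reflexivity. Qed.

(* Products are normalised to right-nested form, where a vanishing product [u v] may
   also occur as [u (v w)]; hence the [mul_eq0_mulA] instances. *)
Ltac block_simpl :=
  repeat progress rewrite ?mulDl, ?mulDr, <- ?mulA, ?mulrN, ?mulNr,
    ?hBC, ?hDC, ?Ad_mul_B, ?Dd_mul_C, ?B_mul_Dd,
    ?(mul_eq0_mulA X _ _ hBC), ?(mul_eq0_mulA X _ _ hDC),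
    ?(mul_eq0_mulA X _ _ Ad_mul_B), ?(mul_eq0_mulA X _ _ Dd_mul_C),
    ?(mul_eq0_mulA X _ _ B_mul_Dd), ?B_mul_D_Dd,
    ?(outer_inverse_sq X A Ad hAc hAi), ?(outer_inverse_mid X A Ad hAi),
    ?(outer_inverse_mid X D Dd hDi), ?mul0r, ?mulr0, ?mul1l, ?mul1r, ?addr0, ?add0, ?opp0.

Lemma block_gdrazin_commute :
  M2mul (mk2 Ad (zero X) (C *^ Ad *^ Ad) Dd) (mk2 A B C D) =
  M2mul (mk2 A B C D) (mk2 Ad (zero X) (C *^ Ad *^ Ad) Dd).
Proof.
  unfold M2mul; simpl. f_equal; block_simpl; auto.
Qed.

Lemma block_gdrazin_outer :
  M2mul (M2mul (mk2 Ad (zero X) (C *^ Ad *^ Ad) Dd) (mk2 A B C D))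
        (mk2 Ad (zero X) (C *^ Ad *^ Ad) Dd) = mk2 Ad (zero X) (C *^ Ad *^ Ad) Dd.
Proof.
  unfold M2mul; simpl. f_equal; block_simpl; auto.
Qed.

Lemma block_gdrazin_residual :
  M2add (mk2 A B C D) (M2opp (M2mul (M2mul (mk2 A B C D) (mk2 A B C D))
                                    (mk2 Ad (zero X) (C *^ Ad *^ Ad) Dd))) =
  mk2 (A +^ -^ (A *^ A *^ Ad)) B (C *^ spid A Ad) (D +^ -^ (D *^ D *^ Dd)).
Proof.
  unfold M2mul, M2add, M2opp, spid; simpl. f_equal; block_simpl; auto.
Qed.

Lemma block_is_gdrazin :
  is_gdrazin2 (mk2 A B C D) (mk2 Ad (zero X) (C *^ Ad *^ Ad) Dd).
Proof.
  split; [exact block_gdrazin_commute | split; [exact block_gdrazin_outer|]].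
  rewrite block_gdrazin_residual.
  apply (quasinil_block X lam); [| | |exact hAq | exact hDq].
  - rewrite B_mul_residual_D, <- A_mul_B, mulDl, mulNr, <- mulA, Ad_mul_B.
    rewrite mulr0, opp0, addr0. reflexivity.
  - block_simpl. reflexivity.
  - block_simpl. reflexivity.
Qed.

Lemma series_term_succ n :
  M2mul (M2mul (M2pow (mk2 A B C D) (S n)) (mk2 (zero X) B C (zero X)))
        (M2pow (mk2 Ad (zero X) (zero X) Dd) (S n + 2)) = M2zero X.
Proof.
  rewrite M2pow_diag.
  destruct (M2pow_right_column_mul X (mk2 A B C D) C hBC hDC n) as [h12 h22].
  destruct (M2pow (mk2 A B C D) (S n)) as [y11 y12 y21 y22]. simpl in h12, h22.
  unfold M2mul, M2zero; simpl. f_equal; block_simpl;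
    rewrite ?(mul_eq0_mulA X _ _ h12), ?(mul_eq0_mulA X _ _ h22); block_simpl; reflexivity.
Qed.

Lemma series_term0 :
  M2mul (M2mul (M2pow (mk2 A B C D) 0) (mk2 (zero X) B C (zero X)))
        (M2pow (mk2 Ad (zero X) (zero X) Dd) (0 + 2)) =
  M2add (mk2 Ad (zero X) (C *^ Ad *^ Ad) Dd) (M2opp (mk2 Ad (zero X) (zero X) Dd)).
Proof.
  rewrite M2pow_diag. unfold M2pow, M2mul, M2add, M2opp; simpl.
  rewrite !addN. f_equal; block_simpl; reflexivity.
Qed.

Lemma block_series :
  M2series_to
    (fun n => M2mul (M2mul (M2pow (mk2 A B C D) n) (mk2 (zero X) B C (zero X)))
                    (M2pow (mk2 Ad (zero X) (zero X) Dd) (n + 2)))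
    (M2add (mk2 Ad (zero X) (C *^ Ad *^ Ad) Dd) (M2opp (mk2 Ad (zero X) (zero X) Dd))).
Proof. rewrite <- series_term0. apply M2series_to_head, series_term_succ. Qed.

End Corollary.

Theorem corollary3p4 (X : CBanachAlgebra) (lam : Cplx) (A B C D Ad Dd : X) :
  lam <> C0 ->
  is_gdrazin A Ad -> is_gdrazin D Dd ->
  mul X A B = scal X lam (mul X (mul X (spid A Ad) B) D) ->
  mul X D C = zero X ->
  mul X B C = zero X ->
  let M := mk2 A B C D in
  let Q := mk2 (zero X) B C (zero X) in
  let Pd := mk2 Ad (zero X) (zero X) Dd in
  exists Md : M2 X,
    is_gdrazin2 M Md /\
    M2series_to (fun n => M2mul (M2mul (M2pow M n) Q) (M2pow Pd (n + 2)))
                (M2add Md (M2opp Pd)).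
Proof.
  intros hlam [hAc [hAi hAq]] [hDc [hDi hDq]] hAB hDC hBC M Q Pd.
  exists (mk2 Ad (zero X) (C *^ Ad *^ Ad) Dd).
  split; [eapply block_is_gdrazin | eapply block_series]; eassumption.
Qed.
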